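(* In the curved-exam game described in the context, fix a student $i$ and define $$\phi_i(z):=\Big(m+\tfrac{n-1}{n}(1-z)\Big)^{\alpha_i}\Big(1+\tfrac{nm}{n-1}-z\Big)^{1-\alpha_i}-1 .$$ Then $\phi_i$ has a unique zero $J_i$ in the interval $\big[\frac{nm-\alpha_i}{n-1},\ \frac{nm}{n-1}-\frac{\alpha_i}{n-\alpha_i}\big]$, which is contained in $\big[\frac{nm-1}{n-1},\frac{nm}{n-1}\big]$. Put $x_i^{(L)}(x_{-i}):=\alpha_i-(1-\alpha_i)\big(\frac{nm}{n-1}-\bar x_{-i}\big)$. If $\bar x_{-i}=J_i$, then $U_i(x_i^{(L)},x_{-i})=U_i(\alpha_i,x_{-i})$, the effort $x_i^{(L)}$ makes the curve ($\bar x<m$) and $\alpha_i$ breaks it ($\bar x\ge m$). The best response correspondence $BR_i(x_{-i})=\arg\max_{x_i\in[0,1]}U_i(x_i,x_{-i})$ is $$BR_i(x_{-i})=\begin{cases}\{\alpha_i\} & \text{if } J_i<\bar x_{-i}\le1,\\ \{\alpha_i-(1-\alpha_i)(\frac{nm}{n-1}-J_i),\ \alpha_i\} & \text{if } \bar x_{-i}=J_i,\\ \{\alpha_i-(1-\alpha_i)(\frac{nm}{n-1}-\bar x_{-i})\} & \text{if } \frac{nm}{n-1}-\frac{\alpha_i}{1-\alpha_i}\le\bar x_{-i}<J_i,\\ \{0\} & \text{if } 0\le\bar x_{-i}\le\frac{nm}{n-1}-\frac{\alpha_i}{1-\alpha_i}.\end{cases}$$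
   Context: The curved-exam game: fix $n\ge2$, abilities $\alpha_1,\dots,\alpha_n\in(0,1)$, target mean $m\in(0,1)$. Student $i$ chooses $x_i\in[0,1]$; $x_{-i}=(x_j)_{j\ne i}$; $\bar x=\frac1n\sum_j x_j$, $\bar x_{-i}=\frac1{n-1}\sum_{j\ne i}x_j$. Grade $G_i(x)=x_i+\max(m-\bar x,0)=\max\big(m+\frac{n-1}{n}(x_i-\bar x_{-i}),x_i\big)$ (not truncated at 1); payoff $U_i(x)=G_i(x)^{\alpha_i}(1-x_i)^{1-\alpha_i}$. *)

(* R : realType; real powers via powR (0 `^ y = 0 for y <> 0). *)
From HB Require Import structures.
From mathcomp Require Import all_boot all_order all_algebra.
From mathcomp Require Import all_classical all_reals.
From mathcomp Require Import exp.
Set Implicit Arguments. Unset Strict Implicit. Unset Printing Implicit Defensive.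
Import Order.TTheory GRing.Theory Num.Theory.
Local Open Scope ring_scope.
Local Open Scope classical_set_scope.

Section CurvedExam.
Variable R : realType.

Definition xbar (n : nat) (x : 'I_n -> R) : R := (\sum_(j < n) x j) / n%:R.

Definition xbar_mi (n : nat) (x : 'I_n -> R) (i : 'I_n) : R :=
  (\sum_(j < n | j != i) x j) / (n%:R - 1).

Definition upd (n : nat) (x : 'I_n -> R) (i : 'I_n) (y : R) : 'I_n -> R :=
  fun j => if j == i then y else x j.

(* grade G_i(x) = x_i + max(m - \bar x, 0)  (not truncated at 1) *)
Definition grade (n : nat) (m : R) (x : 'I_n -> R) (i : 'I_n) : R :=
  x i + Num.max (m - xbar x) 0.

Definition payoff (n : nat) (alpha : 'I_n -> R) (m : R) (x : 'I_n -> R)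
  (i : 'I_n) : R :=
  (grade m x i) `^ (alpha i) * (1 - x i) `^ (1 - alpha i).

Definition BR (n : nat) (alpha : 'I_n -> R) (m : R) (x : 'I_n -> R)
  (i : 'I_n) : set R :=
  [set y | (0 <= y <= 1) /\
     forall z, 0 <= z <= 1 -> payoff alpha m (upd x i z) i <= payoff alpha m (upd x i y) i].

Definition phi (n : nat) (alpha : 'I_n -> R) (m : R) (i : 'I_n) (z : R) : R :=
  (m + (n%:R - 1) / n%:R * (1 - z)) `^ (alpha i)
  * (1 + n%:R * m / (n%:R - 1) - z) `^ (1 - alpha i) - 1.

End CurvedExam.

From HB Require Import structures.
From mathcomp Require Import all_boot all_order all_algebra.
From mathcomp Require Import all_classical all_reals.
From mathcomp Require Import sequences exp.
From mathcomp Require Import ring lra.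
Set Implicit Arguments. Unset Strict Implicit. Unset Printing Implicit Defensive.
Import Order.TTheory GRing.Theory Num.Theory.
Local Open Scope ring_scope.
Local Open Scope classical_set_scope.

(* Fix the others' efforts and let d := nm/(n-1) - \bar x_{-i}.  The curve applies
   to student i exactly when her effort y is below (n-1) d, and then her grade is
   (n-1)/n (y + d); otherwise it is y.  Hence her payoff is the Cobb-Douglas
   function y^a (1-y)^(1-a) on the "break" region and k (y+d)^a (1-y)^(1-a), with
   k = ((n-1)/n)^a, on the "curve" region.  Weighted AM-GM, in its tangent-plane
   form, shows that these two branches peak uniquely at a and at a - (1-a) d, with
   values W and k W (1+d), W = a^a (1-a)^(1-a).  So the student is indifferent
   exactly when k (1+d) = 1, i.e. at d = D := (n/(n-1))^a - 1; phi_i is the affine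
   map z |-> k (1 + nm/(n-1) - z) - 1, whose zero is J_i = nm/(n-1) - D.  AM-GM
   again gives a/(n-a) < D <= a/(n-1), which puts each peak inside its own region
   at the indifference point.  Finally, when a <= (1-a) d the curve peak is not
   positive, the payoff is decreasing on [0,1], and the best response is 0. *)

Section CobbDouglas.
Variable R : realType.
Implicit Types a s t p q y d : R.

Definition cobb_douglas a s t : R := s `^ a * t `^ (1 - a).

Lemma cobb_douglas_gt0 a s t : 0 < s -> 0 < t -> 0 < cobb_douglas a s t.
Proof. by move=> s_gt0 t_gt0; apply: mulr_gt0; apply: powR_gt0. Qed.

Lemma cobb_douglasM a p q s t : 0 <= p -> 0 <= q -> 0 <= s -> 0 <= t ->
  cobb_douglas a (p * s) (q * t) = cobb_douglas a p q * cobb_douglas a s t.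
Proof. by move=> p_ge0 q_ge0 s_ge0 t_ge0; rewrite /cobb_douglas !powRM // mulrACA. Qed.

Lemma cobb_douglas_id a s : 0 <= s -> cobb_douglas a s s = s.
Proof.
move=> s_ge0; rewrite /cobb_douglas -powRD; last by rewrite addrC subrK oner_eq0.
by rewrite addrC subrK powRr1.
Qed.

Lemma cobb_douglas_lt_amgm a (a01 : 0 < a < 1) s t : 0 < s -> 0 < t -> s != t ->
  cobb_douglas a s t < a * s + (1 - a) * t.
Proof.
move=> s_gt0 t_gt0 st.
have [a_gt0 a1_gt0] : 0 < a /\ 0 < 1 - a by split; lra.
rewrite /cobb_douglas /powR (gt_eqF s_gt0) (gt_eqF t_gt0) -expRD.
set w := _ + _; set E := expR w.
have expR_shift u : 0 < u -> u = E * expR (ln u - w).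
  by move=> u_gt0; rewrite -expRD addrC subrK lnK.
have ln_st : ln s - w = (1 - a) * (ln s - ln t) by rewrite /w; ring.
have ln_neq : ln s != ln t.
  by apply: contra st => /eqP ln_eq; rewrite -(lnK s_gt0) -(lnK t_gt0) ln_eq.
have s_gt : E * (1 + (ln s - w)) < s.
  rewrite [X in _ < X](expR_shift s) // ltr_pM2l ?expR_gt0 // expR_gt1Dx //.
  have a1_neq0 : 1 - a != 0 by rewrite gt_eqF.
  by rewrite ln_st mulf_neq0 // subr_eq0.
have t_ge : E * (1 + (ln t - w)) <= t.
  by rewrite [X in _ <= X](expR_shift t) // ler_pM2l ?expR_gt0 // expR_ge1Dx.
have E_split : E = a * (E * (1 + (ln s - w))) + (1 - a) * (E * (1 + (ln t - w))).
  by rewrite /w; ring.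
have a_s : a * (E * (1 + (ln s - w))) < a * s by rewrite ltr_pM2l.
have a_t : (1 - a) * (E * (1 + (ln t - w))) <= (1 - a) * t.
  by rewrite ler_wpM2l // ltW.
lra.
Qed.

Lemma cobb_douglas_amgm a (a01 : 0 < a < 1) s t : 0 <= s -> 0 <= t ->
  cobb_douglas a s t <= a * s + (1 - a) * t ?= iff (s == t).
Proof.
move=> s_ge0 t_ge0; apply/leifP; have [<-|st] := eqVneq s t.
  by rewrite cobb_douglas_id // -mulrDl addrC subrK mul1r.
have [a_gt0 a1_gt0] : 0 < a /\ 0 < 1 - a by split; lra.
have [s0|s_neq0] := eqVneq s 0.
  have t_gt0 : 0 < t by rewrite lt_def t_ge0 andbT eq_sym -s0.
  by rewrite s0 /cobb_douglas powR0 ?mul0r ?lt0r_neq0 //; nra.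
have [t0|t_neq0] := eqVneq t 0.
  have s_gt0 : 0 < s by rewrite lt_def s_ge0 andbT.
  by rewrite t0 /cobb_douglas powR0 ?mulr0 ?lt0r_neq0 //; nra.
by apply: cobb_douglas_lt_amgm; rewrite // lt_def ?s_ge0 ?t_ge0 ?andbT.
Qed.

Lemma cobb_douglas_tangent a (a01 : 0 < a < 1) s t p q : 0 <= s -> 0 <= t -> 0 < p -> 0 < q ->
  cobb_douglas a s t <= cobb_douglas a p q * (a * (s / p) + (1 - a) * (t / q))
    ?= iff (s / p == t / q).
Proof.
move=> s_ge0 t_ge0 p_gt0 q_gt0.
have s_eq : s = p * (s / p) by rewrite mulrC divfK // gt_eqF.
have t_eq : t = q * (t / q) by rewrite mulrC divfK // gt_eqF.
have [p_ge0 q_ge0] := (ltW p_gt0, ltW q_gt0).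
have [sp_ge0 tq_ge0] := (divr_ge0 s_ge0 p_ge0, divr_ge0 t_ge0 q_ge0).
rewrite {1}s_eq {1}t_eq cobb_douglasM //.
rewrite (mono_leif (ler_pM2l (cobb_douglas_gt0 a p_gt0 q_gt0))).
exact: cobb_douglas_amgm.
Qed.

Lemma cobb_douglas_budget a (a01 : 0 < a < 1) s t : 0 <= s -> 0 <= t ->
  cobb_douglas a s t <= cobb_douglas a a (1 - a) * (s + t)
    ?= iff ((1 - a) * s == a * t).
Proof.
move=> s_ge0 t_ge0.
have [a_gt0 a1_gt0] : 0 < a /\ 0 < 1 - a by split; lra.
have := cobb_douglas_tangent a01 s_ge0 t_ge0 a_gt0 a1_gt0.
rewrite eqr_div ?lt0r_neq0 // [s * (1 - a)]mulrC [t * a]mulrC.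
by rewrite (_ : a * (s / a) + _ = s + t) //; field; rewrite !gt_eqF.
Qed.

Lemma cobb_douglas_compl_nonincr a (a01 : 0 < a < 1) t y : a <= t -> t <= y <= 1 ->
  cobb_douglas a y (1 - y) <= cobb_douglas a t (1 - t).
Proof.
move=> a_le_t /andP[t_le_y y_le1].
have [t1|t_neq1] := eqVneq t 1; first by rewrite (_ : y = t) //; lra.
have t_gt0 : 0 < t by lra.
have t1_gt0 : 0 < 1 - t by rewrite subr_gt0 lt_neqAle t_neq1 /=; lra.
have [y_ge0 y1_ge0] : 0 <= y /\ 0 <= 1 - y by split; lra.
apply: le_trans (cobb_douglas_tangent a01 y_ge0 y1_ge0 t_gt0 t1_gt0) _.
apply: ler_piMr; first exact: ltW (cobb_douglas_gt0 a t_gt0 t1_gt0).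
have : (y - t) * (a - t) / (t * (1 - t)) <= 0.
  rewrite pmulr_lle0 ?invr_gt0 ?mulr_gt0 //.
  have [yt_ge0 at_le0] : 0 <= y - t /\ a - t <= 0 by split; lra.
  nra.
rewrite (_ : (y - t) * (a - t) / _ = a * (y / t) + (1 - a) * ((1 - y) / (1 - t)) - 1).
  lra.
by field; rewrite !gt_eqF.
Qed.

(* The hypothesis [a <= (1 - a) * d] says that the peak [a - (1 - a) * d] of
   [y |-> cobb_douglas a (y + d) (1 - y)] is not positive. *)
Lemma cobb_douglas_shift_lt a (a01 : 0 < a < 1) d y :
  0 < d -> a <= (1 - a) * d -> 0 < y <= 1 ->
  cobb_douglas a (y + d) (1 - y) < cobb_douglas a d 1.
Proof.
move=> d_gt0 peak_le0 /andP[y_gt0 y_le1].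
have [yd_ge0 y1_ge0] : 0 <= y + d /\ 0 <= 1 - y by split; lra.
have tangent := cobb_douglas_tangent a01 yd_ge0 y1_ge0 d_gt0 ltr01.
have ratio_gt1 : 1 < (y + d) / d by rewrite ltr_pdivlMr // mul1r ltrDr.
have strict : cobb_douglas a (y + d) (1 - y) <
    cobb_douglas a d 1 * (a * ((y + d) / d) + (1 - a) * ((1 - y) / 1)).
  by rewrite (lt_leif tangent) divr1 gt_eqF //; lra.
apply: lt_le_trans strict _.
apply: ler_piMr; first exact: ltW (cobb_douglas_gt0 a d_gt0 ltr01).
have : y * (a - (1 - a) * d) / d <= 0.
  rewrite pmulr_lle0 ?invr_gt0 //.
  have peak_le0' : a - (1 - a) * d <= 0 by lra.
  nra.
rewrite (_ : y * _ / d = a * ((y + d) / d) + (1 - a) * ((1 - y) / 1) - 1).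
  lra.
by field; rewrite gt_eqF.
Qed.
End CobbDouglas.

Lemma leif_or_lt disp (T : porderType disp) (x y : T) C :
  (x <= y ?= iff C)%O -> C \/ (x < y)%O.
Proof. by case: C => /leifP => [/eqP ->|]; [left|right]. Qed.

Section Argmax.
Variable R : realType.
Implicit Types (f : R -> R) (P : set R).

Definition argmax01 f : set R :=
  [set y | 0 <= y <= 1 /\ forall z, 0 <= z <= 1 -> f z <= f y].

Lemma argmax01_eq f P V : (exists y, P y) ->
  (forall y, P y -> 0 <= y <= 1 /\ f y = V) ->
  (forall z, 0 <= z <= 1 -> P z \/ f z < V) ->
  argmax01 f = P.
Proof.
move=> [y0 Py0] onP offP; have [y0_01 fy0] := onP y0 Py0.
have le_V z : 0 <= z <= 1 -> f z <= V by move=> /offP [/onP [_ ->]|/ltW].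
rewrite /argmax01; apply/seteqP; split => y /=.
  move=> [y01 y_max]; case: (offP y y01) => // fy_lt.
  by have := y_max y0 y0_01; rewrite fy0 leNgt fy_lt.
by move=> Py; have [y01 ->] := onP y Py; split => // z /le_V.
Qed.
End Argmax.

Section ReducedPayoff.
Variables (R : realType) (a nr : R).

(* [d] stands for the deficit [nm/(n-1) - \bar x_{-i}] of the others' average effort;
   see [payoff_upd]. *)
Definition reduced_payoff (d y : R) : R :=
  cobb_douglas a (y + Num.max (((nr - 1) * d - y) / nr) 0) (1 - y).

Definition indifference_deficit : R := (nr / (nr - 1)) `^ a - 1.

Local Notation kappa := (((nr - 1) / nr) `^ a).
Local Notation peak := (cobb_douglas a a (1 - a)).
Local Notation D := indifference_deficit.

Lemma kappa_gt0 (nr_ge2 : 2 <= nr) : 0 < kappa.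
Proof. by apply: powR_gt0; apply: divr_gt0; lra. Qed.

Lemma reduced_payoff_curve (nr_ge2 : 2 <= nr) d y : 0 <= y -> y <= (nr - 1) * d ->
  reduced_payoff d y = kappa * cobb_douglas a (y + d) (1 - y).
Proof.
move=> y_ge0 y_curve; have d_ge0 : 0 <= d by nra.
have nr_gt0 : 0 < nr by lra.
have k_ge0 : 0 <= (nr - 1) / nr by apply: divr_ge0; lra.
have yd_ge0 : 0 <= y + d by lra.
rewrite /reduced_payoff max_l; last by apply: divr_ge0; lra.
rewrite (_ : y + ((nr - 1) * d - y) / nr = (nr - 1) / nr * (y + d)); last first.
  by field; rewrite gt_eqF.
by rewrite /cobb_douglas powRM // mulrA.
Qed.

Lemma reduced_payoff_break (nr_ge2 : 2 <= nr) d y : (nr - 1) * d <= y ->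
  reduced_payoff d y = cobb_douglas a y (1 - y).
Proof.
move=> y_break; have nr_gt0 : 0 < nr by lra.
by rewrite /reduced_payoff max_r ?addr0 // pmulr_lle0 ?invr_gt0 // subr_le0.
Qed.

Lemma kappa_indifference (nr_ge2 : 2 <= nr) : kappa * (1 + D) = 1.
Proof.
have [k_ge0 k'_ge0] : 0 <= (nr - 1) / nr /\ 0 <= nr / (nr - 1).
  by split; apply: divr_ge0; lra.
rewrite [1 + _]addrC subrK -powRM // (_ : _ * _ = 1) ?powR1 //.
by field; apply/andP; split; apply/lt0r_neq0; lra.
Qed.

Lemma indifference_deficit_le (a01 : 0 < a < 1) (nr_ge2 : 2 <= nr) : (nr - 1) * D <= a.
Proof.
have nr1_gt0 : 0 < nr - 1 by lra.
have k'_ge0 : 0 <= nr / (nr - 1) by apply: divr_ge0; lra.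
have := Order.le_of_leif (cobb_douglas_amgm a01 k'_ge0 ler01).
rewrite /cobb_douglas powR1 mulr1 (_ : _ + _ = 1 + a / (nr - 1)); last first.
  by field; rewrite gt_eqF.
by rewrite /indifference_deficit [(nr - 1) * _]mulrC -ler_pdivlMr //; lra.
Qed.

Lemma indifference_deficit_gt (a01 : 0 < a < 1) (nr_ge2 : 2 <= nr) :
  a - (1 - a) * D < (nr - 1) * D.
Proof.
have nr_gt0 : 0 < nr by lra.
have k_ge0 : 0 <= (nr - 1) / nr by apply: divr_ge0; lra.
have k_neq1 : (nr - 1) / nr != 1 by rewrite lt_eqF // ltr_pdivrMr //; lra.
pose r := a / nr; have a_eq : a = nr * r by rewrite mulrC divfK ?gt_eqF.
have kappa_lt : kappa < 1 - r.
  have amgm := cobb_douglas_amgm a01 k_ge0 ler01.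
  rewrite /cobb_douglas powR1 mulr1 in amgm.
  rewrite (_ : 1 - r = a * ((nr - 1) / nr) + (1 - a) * 1); last first.
    by rewrite /r; field; rewrite gt_eqF.
  by rewrite (lt_leif amgm) k_neq1.
have D1_gt0 : 0 < 1 + D.
  by rewrite [1 + _]addrC subrK powR_gt0 // divr_gt0 //; lra.
have : 1 < (1 - r) * (1 + D) by rewrite -[X in X < _](kappa_indifference nr_ge2) ltr_pM2r.
by rewrite a_eq; nra.
Qed.

Lemma indifference_deficit_gt0 (a01 : 0 < a < 1) (nr_ge2 : 2 <= nr) : 0 < D.
Proof. by have := indifference_deficit_gt a01 nr_ge2; nra. Qed.

Lemma indifference_deficit_bounds (a01 : 0 < a < 1) (nr_ge2 : 2 <= nr) :
  [/\ 0 < a / (nr - a), a / (nr - a) < D & D <= a / (nr - 1)].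
Proof.
have D_le := indifference_deficit_le a01 nr_ge2.
have D_gt := indifference_deficit_gt a01 nr_ge2.
have [nr1_gt0 nra_gt0] : 0 < nr - 1 /\ 0 < nr - a by split; lra.
split; first by apply: divr_gt0; lra.
  by rewrite ltr_pdivrMr //; lra.
by rewrite ler_pdivlMr // mulrC.
Qed.

Lemma reduced_payoff_break_leif (a01 : 0 < a < 1) (nr_ge2 : 2 <= nr) d y :
  0 <= y <= 1 -> (nr - 1) * d <= y ->
  reduced_payoff d y <= peak ?= iff (y == a).
Proof.
move=> y01 y_break; have [y_ge0 y1_ge0] : 0 <= y /\ 0 <= 1 - y by split; lra.
rewrite reduced_payoff_break //.
have := cobb_douglas_budget a01 y_ge0 y1_ge0.
rewrite [y + _]addrC subrK mulr1 -subr_eq0.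
by rewrite (_ : (1 - a) * y - a * (1 - y) = y - a) ?subr_eq0 //; ring.
Qed.

Lemma reduced_payoff_curve_leif (a01 : 0 < a < 1) (nr_ge2 : 2 <= nr) d y :
  0 <= y <= 1 -> y <= (nr - 1) * d ->
  reduced_payoff d y <= kappa * (peak * (1 + d)) ?= iff (y == a - (1 - a) * d).
Proof.
move=> y01 y_curve; have d_ge0 : 0 <= d by nra.
have [yd_ge0 y1_ge0] : 0 <= y + d /\ 0 <= 1 - y by split; lra.
rewrite reduced_payoff_curve //; try lra.
rewrite (mono_leif (ler_pM2l (kappa_gt0 nr_ge2))).
have := cobb_douglas_budget a01 yd_ge0 y1_ge0.
rewrite (_ : y + d + (1 - y) = 1 + d); last by ring.
rewrite -subr_eq0 (_ : (1 - a) * (y + d) - a * (1 - y) = y - (a - (1 - a) * d)).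
  by rewrite subr_eq0.
by ring.
Qed.

Lemma reduced_payoff_curve_peak (a01 : 0 < a < 1) (nr_ge2 : 2 <= nr) d :
  0 <= a - (1 - a) * d <= (nr - 1) * d ->
  reduced_payoff d (a - (1 - a) * d) = kappa * (peak * (1 + d)).
Proof.
move=> /andP[peak_ge0 peak_curve]; have d_ge0 : 0 <= d by nra.
have peak01 : 0 <= a - (1 - a) * d <= 1 by apply/andP; split; nra.
exact: eqTleif (reduced_payoff_curve_leif a01 nr_ge2 peak01 peak_curve) (eqxx _).
Qed.

Lemma reduced_payoff_indifference (a01 : 0 < a < 1) (nr_ge2 : 2 <= nr) :
  reduced_payoff D (a - (1 - a) * D) = reduced_payoff D a.
Proof.
have D_le := indifference_deficit_le a01 nr_ge2.
have D_gt := indifference_deficit_gt a01 nr_ge2.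
have D_gt0 := indifference_deficit_gt0 a01 nr_ge2.
rewrite reduced_payoff_curve_peak //; last by apply/andP; split; nra.
rewrite reduced_payoff_break //.
by rewrite mulrCA kappa_indifference // mulr1.
Qed.

Lemma argmax_reduced_payoff_break (a01 : 0 < a < 1) (nr_ge2 : 2 <= nr) d :
  d < D -> argmax01 (reduced_payoff d) = [set a].
Proof.
move=> d_lt; have D_le := indifference_deficit_le a01 nr_ge2.
have a_break : (nr - 1) * d <= a by nra.
have curve_lt : kappa * (peak * (1 + d)) < peak.
  rewrite mulrCA gtr_pMr ?cobb_douglas_gt0 //; try lra.
  by rewrite -[X in _ < X](kappa_indifference nr_ge2) ltr_pM2l ?kappa_gt0 // ltrD2l.
apply: (argmax01_eq (V := peak)); first by exists a.
  by move=> y ->; rewrite reduced_payoff_break //; split => //; lra.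
move=> z z01; have [z_curve|z_break] := leP z ((nr - 1) * d).
  by right; apply: le_lt_trans curve_lt; apply: reduced_payoff_curve_leif.
by case: (leif_or_lt (reduced_payoff_break_leif a01 nr_ge2 z01 (ltW z_break)))
  => [/eqP|]; [left|right].
Qed.

Lemma argmax_reduced_payoff_indifference (a01 : 0 < a < 1) (nr_ge2 : 2 <= nr) :
  argmax01 (reduced_payoff D) = [set a - (1 - a) * D] `|` [set a].
Proof.
have D_le := indifference_deficit_le a01 nr_ge2.
have curve_peak : kappa * (peak * (1 + D)) = peak.
  by rewrite mulrCA kappa_indifference // mulr1.
have a_peak : reduced_payoff D a = peak by rewrite reduced_payoff_break.
apply: (argmax01_eq (V := peak)); first by exists a; right.
  move=> y [|] ->; last by split => //; lra.
  rewrite reduced_payoff_indifference //; split => //.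
  have D_gt := indifference_deficit_gt a01 nr_ge2.
  have D_gt0 := indifference_deficit_gt0 a01 nr_ge2.
  apply/andP; split; nra.
move=> z z01; have [z_curve|z_break] := leP z ((nr - 1) * D).
  have := reduced_payoff_curve_leif a01 nr_ge2 z01 z_curve; rewrite curve_peak.
  by case/leif_or_lt => [/eqP|]; [left; left | right].
by case: (leif_or_lt (reduced_payoff_break_leif a01 nr_ge2 z01 (ltW z_break)))
  => [/eqP|]; [left; right|right].
Qed.

Lemma argmax_reduced_payoff_curve (a01 : 0 < a < 1) (nr_ge2 : 2 <= nr) d :
  D < d -> d <= a / (1 - a) ->
  argmax01 (reduced_payoff d) = [set a - (1 - a) * d].
Proof.
move=> D_lt d_le.
have D_gt := indifference_deficit_gt a01 nr_ge2.
have D_gt0 := indifference_deficit_gt0 a01 nr_ge2.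
have peak_ge0 : 0 <= a - (1 - a) * d.
  by move: d_le; rewrite ler_pdivlMr; [nra | lra].
have peak_curve : a - (1 - a) * d <= (nr - 1) * d by nra.
have break_lt : peak < kappa * (peak * (1 + d)).
  rewrite mulrCA ltr_pMr ?cobb_douglas_gt0 //; try lra.
  by rewrite -[X in X < _](kappa_indifference nr_ge2) ltr_pM2l ?kappa_gt0 // ltrD2l.
apply: (argmax01_eq (V := kappa * (peak * (1 + d)))).
- by exists (a - (1 - a) * d).
- move=> y ->; rewrite reduced_payoff_curve_peak //; last exact/andP.
  by split => //; apply/andP; split; nra.
move=> z z01; have [z_curve|z_break] := leP z ((nr - 1) * d).
  by case: (leif_or_lt (reduced_payoff_curve_leif a01 nr_ge2 z01 z_curve))
    => [/eqP|]; [left|right].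
right; apply: le_lt_trans break_lt.
exact: reduced_payoff_break_leif (ltW z_break).
Qed.

Lemma argmax_reduced_payoff_zero (a01 : 0 < a < 1) (nr_ge2 : 2 <= nr) d :
  a / (1 - a) <= d -> argmax01 (reduced_payoff d) = [set 0].
Proof.
move=> d_ge.
have peak_le0 : a <= (1 - a) * d by move: d_ge; rewrite ler_pdivrMr; [nra | lra].
have d_gt0 : 0 < d by nra.
have a_le_t : a <= (nr - 1) * d by nra.
have curve_lt y : 0 < y <= 1 -> y <= (nr - 1) * d ->
    reduced_payoff d y < kappa * cobb_douglas a d 1.
  move=> /andP[y_gt0 y_le1] y_curve.
  rewrite reduced_payoff_curve ?ltr_pM2l ?kappa_gt0 //; last by lra.
  by apply: cobb_douglas_shift_lt => //; apply/andP.
apply: (argmax01_eq (V := kappa * cobb_douglas a d 1)); first by exists 0.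
  move=> y ->; split; first by lra.
  by rewrite reduced_payoff_curve ?add0r ?subr0 //; lra.
move=> z /andP[z_ge0 z_le1]; have [->|z_neq0] := eqVneq z 0; first by left.
have z_gt0 : 0 < z by rewrite lt_def z_neq0.
right; have [z_curve|z_break] := leP z ((nr - 1) * d).
  by apply: curve_lt => //; apply/andP.
rewrite (reduced_payoff_break nr_ge2 (ltW z_break)).
have t_le_z : (nr - 1) * d <= z <= 1 by rewrite z_le1 andbT ltW.
apply: le_lt_trans (cobb_douglas_compl_nonincr a01 a_le_t t_le_z) _.
rewrite -(reduced_payoff_break nr_ge2 (lexx ((nr - 1) * d))).
by apply: curve_lt => //; apply/andP; split; nra.
Qed.
End ReducedPayoff.

Section CurvedExamGame.
Variables (R : realType) (n : nat) (alpha : 'I_n -> R) (m : R) (i : 'I_n).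
Hypothesis n_ge2 : (2 <= n)%N.
Local Notation nr := (n%:R : R).
Local Notation c := (nr * m / (nr - 1)).

Lemma nr_ge2 : 2 <= nr.
Proof. by rewrite (ler_nat R 2 n). Qed.

Lemma xbar_upd x y :
  xbar (upd x i y) = m + (y - (nr - 1) * (c - xbar_mi x i)) / nr.
Proof.
have nr2 := nr_ge2; have nr1_neq0 : nr - 1 != 0 by apply/lt0r_neq0; lra.
rewrite /xbar (bigD1 i) //= {1}/upd eqxx.
rewrite (eq_bigr x) => [|j /negbTE]; last by rewrite /upd => ->.
rewrite -[\sum_(j < n | j != i) x j](divfK nr1_neq0) -/(xbar_mi x i).
by field; apply/andP; split => //; apply/lt0r_neq0; lra.
Qed.

Lemma xbar_upd_lt x y :
  (xbar (upd x i y) < m) = (y < (nr - 1) * (c - xbar_mi x i)).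
Proof.
have nr_gt0 : 0 < nr by have := nr_ge2; lra.
by rewrite xbar_upd gtrDl pmulr_llt0 ?invr_gt0 // subr_lt0.
Qed.

Lemma payoff_upd x y :
  payoff alpha m (upd x i y) i = reduced_payoff (alpha i) nr (c - xbar_mi x i) y.
Proof.
have nr2 := nr_ge2.
rewrite /payoff /grade xbar_upd /upd eqxx /reduced_payoff /cobb_douglas.
congr ((_ + Num.max _ _) `^ _ * _).
by field; apply/andP; split; apply/lt0r_neq0; lra.
Qed.

Lemma BR_reduced x :
  BR alpha m x i = argmax01 (reduced_payoff (alpha i) nr (c - xbar_mi x i)).
Proof. by rewrite -(funext (payoff_upd x)). Qed.

Lemma phi_eq0 z : z <= 1 + c ->
  phi alpha m i z = 0 <-> z = c - indifference_deficit (alpha i) nr.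
Proof.
move=> z_le; have nr2 := nr_ge2.
have k_ge0 : 0 <= (nr - 1) / nr by apply: divr_ge0; lra.
have base : m + (nr - 1) / nr * (1 - z) = (nr - 1) / nr * (1 + c - z).
  by field; apply/andP; split; apply/lt0r_neq0; lra.
rewrite /phi base powRM //; last by lra.
rewrite -mulrA.
have -> : (1 + c - z) `^ alpha i * (1 + c - z) `^ (1 - alpha i) = 1 + c - z.
  by apply: cobb_douglas_id; lra.
have kappa_neq0 := lt0r_neq0 (kappa_gt0 (alpha i) nr2).
have kappa_D := kappa_indifference (alpha i) nr2.
set D := indifference_deficit (alpha i) nr in kappa_D *.
split => [phi0|->]; last by rewrite (_ : 1 + c - (c - D) = 1 + D) ?kappa_D ?subrr //; ring.
have : ((nr - 1) / nr) `^ alpha i * (1 + c - z) = ((nr - 1) / nr) `^ alpha i * (1 + D).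
  by rewrite kappa_D; apply/eqP; rewrite -subr_eq0 phi0.
by move/(mulfI kappa_neq0); lra.
Qed.
End CurvedExamGame.

Theorem mainTheorem10 (R : realType) (n : nat) (alpha : 'I_n -> R) (m : R)
  (i : 'I_n) :
  (2 <= n)%N ->
  (forall j, 0 < alpha j < 1) ->
  0 < m < 1 ->
  let nr := n%:R : R in
  let c := nr * m / (nr - 1) in
  exists J : R,
    [/\ (nr * m - alpha i) / (nr - 1) <= J <= c - alpha i / (nr - alpha i),
        phi alpha m i J = 0,
        (forall z, (nr * m - alpha i) / (nr - 1) <= z <= c - alpha i / (nr - alpha i) ->
                   phi alpha m i z = 0 -> z = J),
        (nr * m - 1) / (nr - 1) <= J <= c &
        forall x : 'I_n -> R,
          (forall j, j != i -> 0 <= x j <= 1) ->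
          let xb := xbar_mi x i in
          let xL := alpha i - (1 - alpha i) * (c - xb) in
          [/\ xb = J ->
                [/\ payoff alpha m (upd x i xL) i = payoff alpha m (upd x i (alpha i)) i,
                    xbar (upd x i xL) < m &
                    m <= xbar (upd x i (alpha i))],
              J < xb <= 1 -> BR alpha m x i = [set alpha i],
              xb = J -> BR alpha m x i =
                  [set alpha i - (1 - alpha i) * (c - J)] `|` [set alpha i],
              c - alpha i / (1 - alpha i) <= xb < J ->
                  BR alpha m x i = [set xL] &
              0 <= xb <= c - alpha i / (1 - alpha i) ->
                  BR alpha m x i = [set 0]]].
Proof.
move=> n2 alpha01 m01 nr c.
have nr2 : 2 <= nr by exact: nr_ge2.
have a01 := alpha01 i; set a := alpha i in a01 *.
set D := indifference_deficit a nr.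
have [lo_gt0 lo_lt_D D_le_hi] : [/\ 0 < a / (nr - a), a / (nr - a) < D & D <= a / (nr - 1)].
  exact: indifference_deficit_bounds.
have hi_le : a / (nr - 1) <= 1 / (nr - 1) by rewrite ler_pM2r ?invr_gt0; lra.
have cut b : (nr * m - b) / (nr - 1) = c - b / (nr - 1).
  by rewrite /c; field; rewrite gt_eqF //; lra.
have phiE z : z <= 1 + c -> phi alpha m i z = 0 <-> z = c - D by exact: phi_eq0.
exists (c - D); split.
- by rewrite cut; apply/andP; split; lra.
- by apply/phiE => //; lra.
- by move=> z /andP[_ z_le] /phiE -> //; lra.
- by rewrite cut; apply/andP; split; lra.
move=> x _ xb xL; rewrite !BR_reduced // -/nr -/c -/a -/xb; set d := c - xb.
have d_D : xb = c - D -> d = D by rewrite /d => ->; ring.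
split.
- move=> /d_D dD; rewrite !payoff_upd // !xbar_upd_lt // leNgt xbar_upd_lt //.
  rewrite -/nr -/c -/a -/xb -/d /xL -/d dD reduced_payoff_indifference // -leNgt.
  by split; [| exact: indifference_deficit_gt | exact: indifference_deficit_le].
- by move=> /andP[J_lt _]; apply: argmax_reduced_payoff_break => //; rewrite /d -/D; lra.
- move=> /d_D dD; rewrite dD (_ : c - (c - D) = D); last by ring.
  exact: argmax_reduced_payoff_indifference.
- by move=> /andP[lo hi]; apply: argmax_reduced_payoff_curve => //; rewrite /d -/D; lra.
by move=> /andP[_ hi]; apply: argmax_reduced_payoff_zero => //; rewrite /d; lra.
Qed.
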